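(* Let $N\ge 2$, let $\{u_j\}_{j=1}^{N-1}$ and $\{v_j\}_{j=1}^{N-1}$ be sequences of positive real numbers related through $v_j=\frac{1}{u_{N-j}}$ for $j=1,\dots,N-1$, let $H\in\mathbb{R}^{(N-1)\times(N-1)}$ be lower triangular, and let $\tau>0$. Then the following are equivalent: (a) (primal Lyapunov condition) For the algorithm with H-matrix $H$ and the sequence $\{u_j\}$, the quantity $U_N-\tau\|\tilde{A}x_N\|^2-\langle \tilde{A}x_N, x_N-y_0\rangle$, written as a vector quadratic form in $\tilde{A}x_1,\dots,\tilde{A}x_N$, is nonnegative for all values of $\tilde{A}x_1,\dots,\tilde{A}x_N\in\mathbb{R}^d$; i.e. $\tau\|\tilde{A}x_N\|^2+\langle \tilde{A}x_N, x_N-y_0\rangle\le U_N$ holds identically. (b) (dual Lyapunov condition) For the algorithm with H-matrix $H^{\mathrm{A}}$ (the anti-diagonal transpose of $H$, $(H^{\mathrm{A}})_{k,j}=H_{N-j,N-k}$) and the sequence $\{v_j\}$, the quantity $-V_0-\tau\|\tilde{A}x_N\|^2-\langle \tilde{A}x_N, x_N-y_0\rangle$, written as a vector quadratic form in $\tilde{A}x_1,\dots,\tilde{A}x_N$, is nonnegative for all values of $\tilde{A}x_1,\dots,\tilde{A}x_N\in\mathbb{R}^d$; i.e. $V_0\le -\tau\|\tilde{A}x_N\|^2-\langle \tilde{A}x_N, x_N-y_0\rangle$ holds identically.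
   Context: Let $T\colon\mathbb{R}^d\to\mathbb{R}^d$ be nonexpansive and $A=2(I+T)^{-1}-I$ the associated maximally monotone operator, so $T=2J_A-I$ with resolvent $J_A=(I+A)^{-1}$. A fixed-point algorithm with lower-triangular H-matrix $H=(h_{k,j})\in\mathbb{R}^{(N-1)\times(N-1)}$ is $y_{k+1}=y_k-\sum_{j=0}^{k}h_{k+1,j+1}(y_j-Ty_j)$ for $k=0,\dots,N-2$. Set $x_{k+1}=J_A(y_k)$ for $k=0,\dots,N-1$ and $\tilde{A}x_{k+1}=y_k-x_{k+1}\in A x_{k+1}$, so that $y_j-Ty_j=2\tilde{A}x_{j+1}$ and $\|y_{N-1}-Ty_{N-1}\|^2=4\|\tilde{A}x_N\|^2$. Using these relations, all of $x_1,\dots,x_N$, $y_1,\dots,y_{N-1}$ and $x_N-y_0$ are linear combinations of $\tilde{A}x_1,\dots,\tilde{A}x_N$ (and $y_0$ cancels in differences), so the expressions in the claim are vector quadratic forms $\sum_{i,j}s_{i,j}\langle g_i,g_j\rangle$ in $g_k=\tilde{A}x_k$, whose coefficients depend on the H-matrix, the weights, and $\tau$. Primal Lyapunov sequence: $U_1=0$, $U_{j+1}=U_j-u_j\langle x_{j+1}-x_j,\tilde{A}x_{j+1}-\tilde{A}x_j\rangle$ for $j=1,\dots,N-1$. Dual Lyapunov sequence: $V_{N-1}=0$, $V_j=V_{j+1}+v_{j+1}\langle x_N-x_{j+1},\tilde{A}x_N-\tilde{A}x_{j+1}\rangle$ for $j=0,\dots,N-2$. By monotonicity, $U_j$ is nonincreasing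 and $V_j$ is nonincreasing, so either condition yields $\|\tilde{A}x_N\|^2\le \|y_0-y_\star\|^2/\tau^2$ for $y_\star\in\mathrm{Fix}\,T$. *)

From HB Require Import structures.
From mathcomp Require Import all_boot all_order all_algebra.
Set Implicit Arguments. Unset Strict Implicit. Unset Printing Implicit Defensive.
Import Order.TTheory GRing.Theory Num.Theory.
Local Open Scope ring_scope.

Section FixedPoint.
Variable R : realFieldType.
Variable d : nat.
Notation vec := 'rV[R]_d.

Definition dot (a b : vec) : R := \sum_(i < d) a 0 i * b 0 i.

(* 0-based access to an n x n matrix by natural-number indices
   (0 outside the range); H is stored 0-based, so the paper's
   h_{k,j} (1-based) is  entry H (k-1) (j-1). *)
Definition entry (n : nat) (H : 'M[R]_n) (i j : nat) : R :=
  match @insub _ (fun k => (k < n)%N) 'I_n i, @insub _ (fun k => (k < n)%N) 'I_n j with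
  | Some i', Some j' => H i' j'
  | _, _ => 0
  end.

(* Anti-diagonal transpose: (H^A)_{k,j} = H_{N-j,N-k} (1-based, size N-1),
   i.e. 0-based H^A k j = H (rev_ord j) (rev_ord k). *)
Definition antiT (n : nat) (H : 'M[R]_n) : 'M[R]_n :=
  \matrix_(k < n, j < n) H (rev_ord j) (rev_ord k).

(* g k stands for  \tilde A x_k  (k = 1..N).  Using y_j - T y_j = 2 g_{j+1}:
   y_{k+1} = y_k - sum_{j=0}^{k} h_{k+1,j+1} (2 g_{j+1}). *)
Fixpoint yseq (n : nat) (H : 'M[R]_n) (g : nat -> vec) (y0 : vec) (k : nat) : vec :=
  match k with
  | 0 => y0
  | k'.+1 => yseq H g y0 k' - \sum_(j < k'.+1) (entry H k' j * 2) *: g j.+1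
  end.

(* x_k = J_A(y_{k-1}) = y_{k-1} - \tilde A x_k, for k >= 1 *)
Definition xseq (n : nat) (H : 'M[R]_n) (g : nat -> vec) (y0 : vec) (k : nat) : vec :=
  yseq H g y0 k.-1 - g k.

Definition U_N (N : nat) (H : 'M[R]_N.-1) (u : nat -> R) (g : nat -> vec) (y0 : vec) : R :=
  - \sum_(1 <= j < N) u j * dot (xseq H g y0 j.+1 - xseq H g y0 j) (g j.+1 - g j).

Definition V_0 (N : nat) (H : 'M[R]_N.-1) (v : nat -> R) (g : nat -> vec) (y0 : vec) : R :=
  \sum_(0 <= j < N.-1) v j.+1 * dot (xseq H g y0 N - xseq H g y0 j.+1) (g N - g j.+1).

Definition primal_cond (N : nat) (H : 'M[R]_N.-1) (u : nat -> R) (tau : R) : Prop :=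
  forall (g : nat -> vec) (y0 : vec),
    tau * dot (g N) (g N) + dot (g N) (xseq H g y0 N - y0) <= U_N H u g y0.

Definition dual_cond (N : nat) (H : 'M[R]_N.-1) (v : nat -> R) (tau : R) : Prop :=
  forall (g : nat -> vec) (y0 : vec),
    V_0 H v g y0 <= - (tau * dot (g N) (g N)) - dot (g N) (xseq H g y0 N - y0).

End FixedPoint.

From HB Require Import structures.
From mathcomp Require Import all_boot all_order all_algebra.
From mathcomp Require Import ring zify.
Import Order.TTheory GRing.Theory Num.Theory.
Local Open Scope ring_scope.

Set Implicit Arguments.
Unset Strict Implicit.
Unset Printing Implicit Defensive.

(* With s_i = y_i - y_{i+1} the i-th step (0 <= i < N-1), the
   primal gap U_N - tau ||g_N||^2 - <g_N, x_N - y_0> unrolls to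
     sum_i <s_i, u_{i+1} (g_{i+2} - g_{i+1}) + g_N>
       + sum_i u_{i+1} ||g_{i+2} - g_{i+1}||^2 + (1 - tau) ||g_N||^2
   and the dual gap -tau ||g_N||^2 - <g_N, x_N - y_0> - V_0 to
     sum_i <s_i, w_i> + sum_j v_{j+1} ||g_N - g_{j+1}||^2 + (1 - tau) ||g_N||^2
   with w_i = g_N + sum_{j <= i} v_{j+1} (g_N - g_{j+1}).  Put g'_N = g_N and
   g'_{N-1-i} = w_i; then g'_{i+2} - g'_{i+1} = -v_{N-1-i} (g_N - g_{N-1-i}),
   so, as u_{i+1} v_{N-1-i} = 1, the dual gap of H^A at g is the primal gap
   of H at g' (the anti-diagonal transpose reverses the triangular double sum
   of the cross terms).  The substitution g |-> g' is invertible on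
   g_1, ..., g_N, which gives both implications. *)

Section InnerProduct.
Variables (R : realFieldType) (d : nat).
Notation vec := 'rV[R]_d.

Lemma dotC (a b : vec) : dot a b = dot b a.
Proof. by apply: eq_bigr => i _; rewrite mulrC. Qed.

Lemma dotDl (a b c : vec) : dot (a + b) c = dot a c + dot b c.
Proof.
by rewrite /dot -big_split; apply: eq_bigr => i _; rewrite mxE mulrDl.
Qed.

Lemma dotZl k (a b : vec) : dot (k *: a) b = k * dot a b.
Proof. by rewrite /dot mulr_sumr; apply: eq_bigr => i _; rewrite mxE mulrA. Qed.

Lemma dotNl (a b : vec) : dot (- a) b = - dot a b.
Proof. by rewrite -scaleN1r dotZl mulN1r. Qed.

Lemma dot0l (b : vec) : dot 0 b = 0.
Proof. by rewrite -(scale0r 0) dotZl mul0r. Qed.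

Lemma dotDr (a b c : vec) : dot a (b + c) = dot a b + dot a c.
Proof. by rewrite dotC dotDl !(dotC a). Qed.

Lemma dotZr k (a b : vec) : dot a (k *: b) = k * dot a b.
Proof. by rewrite dotC dotZl dotC. Qed.

Lemma dotNr (a b : vec) : dot a (- b) = - dot a b.
Proof. by rewrite dotC dotNl dotC. Qed.

Lemma dot_suml I (r : seq I) (P : pred I) (F : I -> vec) b :
  dot (\sum_(i <- r | P i) F i) b = \sum_(i <- r | P i) dot (F i) b.
Proof. exact: (big_morph _ (fun x y => dotDl x y b) (dot0l b)). Qed.

Lemma dot_sumr I (r : seq I) (P : pred I) (F : I -> vec) a :
  dot a (\sum_(i <- r | P i) F i) = \sum_(i <- r | P i) dot a (F i).
Proof. by rewrite dotC dot_suml; apply: eq_bigr => i _; rewrite dotC. Qed.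

End InnerProduct.

Section TriangularSums.
Variables (V : nmodType) (n : nat).

Lemma big_ord_widen_le (F : nat -> V) (i : 'I_n) :
  \sum_(j < i.+1) F j = \sum_(j < n | (j <= i)%N) F j.
Proof.
by rewrite (big_ord_widen n F (ltn_ord i)); apply: eq_bigl => j; rewrite ltnS.
Qed.

Lemma exchange_big_tri (F : 'I_n -> 'I_n -> V) :
  \sum_(j < n) \sum_(i < n | (j <= i)%N) F i j =
  \sum_(i < n) \sum_(j < n | (j <= i)%N) F i j.
Proof. exact: (exchange_big_dep xpredT). Qed.

Lemma reindex_big_tri_rev (F : 'I_n -> 'I_n -> V) :
  \sum_(i < n) \sum_(j < n | (j <= i)%N) F i j =
  \sum_(i < n) \sum_(j < n | (j <= i)%N) F (rev_ord j) (rev_ord i).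
Proof.
rewrite (reindex_inj rev_ord_inj) -exchange_big_tri; apply: eq_bigr => i _.
rewrite (reindex_inj rev_ord_inj); apply: eq_bigl => j /=.
by have := ltn_ord i; have := ltn_ord j; lia.
Qed.

End TriangularSums.

Lemma eq_from_last_diffs (V : zmodType) (a b : nat -> V) n k :
  (0 < k <= n.+1)%N -> a n.+1 = b n.+1 ->
  (forall i, (i < n)%N -> a i.+2 - a i.+1 = b i.+2 - b i.+1) -> a k = b k.
Proof.
move=> k_range eq_last eq_diff.
suff eq_from_top : forall m, (m <= n)%N -> a (n.+1 - m)%N = b (n.+1 - m)%N.
  have k_le : (k <= n.+1)%N by case/andP: k_range.
  by rewrite -(subKn k_le) eq_from_top //; lia.
elim=> [_|m IHm lt_mn]; first by rewrite subn0.
have [-> top] : (n.+1 - m.+1 = (n - m.+1).+1 /\ n.+1 - m = (n - m.+1).+2)%N.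
  by split; lia.
have lt_n : (n - m.+1 < n)%N by lia.
move: (eq_diff _ lt_n); rewrite -top IHm; last exact: ltnW.
by move=> /addrI /oppr_inj.
Qed.

Section Gaps.
Variables (R : realFieldType) (d n : nat) (H : 'M[R]_n).
Notation vec := 'rV[R]_d.
Implicit Types (g : nat -> vec) (u v : nat -> R) (tau : R).

Definition ystep g i : vec := \sum_(j < i.+1) (entry H i j * 2) *: g j.+1.

Lemma yseqE g (y0 : vec) k : yseq H g y0 k = y0 - \sum_(i < k) ystep g i.
Proof.
elim: k => [|k IHk] /=; first by rewrite big_ord0 subr0.
by rewrite IHk [in RHS]big_ord_recr opprD addrA.
Qed.

Lemma ystep_ord g (i : 'I_n) :
  ystep g i = \sum_(j < n | (j <= i)%N) (H i j * 2) *: g j.+1.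
Proof.
rewrite /ystep (big_ord_widen_le (fun j => (entry H i j * 2) *: g j.+1)).
apply: eq_bigr => j _.
by rewrite /entry !valK.
Qed.

Lemma ystep_ext g1 g2 i :
  (forall j, (j <= i)%N -> g1 j.+1 = g2 j.+1) -> ystep g1 i = ystep g2 i.
Proof. by move=> eq_g; apply: eq_bigr => j _; rewrite eq_g // -ltnS. Qed.

Lemma xseq_diff g (y0 : vec) j :
  xseq H g y0 j.+2 - xseq H g y0 j.+1 = - ystep g j - (g j.+2 - g j.+1).
Proof. by rewrite /xseq /=; apply/rowP => k; rewrite !mxE; ring. Qed.

Lemma xseq_last_diff g (y0 : vec) j : (j <= n)%N ->
  xseq H g y0 n.+1 - xseq H g y0 j.+1 =
  - \sum_(i < n | (j <= i)%N) ystep g i - (g n.+1 - g j.+1).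
Proof.
move=> le_jn; have split_at_j : \sum_(i < n) ystep g i =
    \sum_(i < j) ystep g i + \sum_(i < n | (j <= i)%N) ystep g i.
  rewrite (bigID (fun i : 'I_n => (i < j)%N)) /= -(big_ord_widen n _ le_jn).
  by congr (_ + _); apply: eq_bigl => i; rewrite -leqNgt.
by rewrite /xseq /= !yseqE split_at_j; apply/rowP => k; rewrite !mxE; ring.
Qed.

Lemma xseq_last_sub g (y0 : vec) :
  xseq H g y0 n.+1 - y0 = - \sum_(i < n) ystep g i - g n.+1.
Proof. by rewrite /xseq /= yseqE; apply/rowP => k; rewrite !mxE; ring. Qed.

Definition primal_gap u tau g (y0 : vec) : R :=
  U_N (N := n.+1) H u g y0
  - (tau * dot (g n.+1) (g n.+1) + dot (g n.+1) (xseq H g y0 n.+1 - y0)).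

Definition dual_gap v tau g (y0 : vec) : R :=
  - (tau * dot (g n.+1) (g n.+1)) - dot (g n.+1) (xseq H g y0 n.+1 - y0)
  - V_0 (N := n.+1) H v g y0.

Lemma primal_gapE u tau g (y0 : vec) : primal_gap u tau g y0 =
  \sum_(i < n) (dot (ystep g i) (u i.+1 *: (g i.+2 - g i.+1) + g n.+1)
                + u i.+1 * dot (g i.+2 - g i.+1) (g i.+2 - g i.+1))
  + (1 - tau) * dot (g n.+1) (g n.+1).
Proof.
have summandE (s e w : vec) (c : R) :
    dot s (c *: e + w) + c * dot e e = dot w s - c * dot (- s - e) e.
  by rewrite !(dotDl, dotDr, dotNl, dotNr, dotZr) (dotC w); ring.
under [X in _ = X + _]eq_bigr do rewrite summandE.
rewrite /primal_gap /U_N big_add1 big_mkord /= xseq_last_sub sumrB.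
under eq_bigr do rewrite xseq_diff.
by rewrite !(dotDr, dotNr) dot_sumr; ring.
Qed.

Definition dual_vars v g b : vec :=
  g n.+1 + \sum_(j < n.+1 - b) v j.+1 *: (g n.+1 - g j.+1).

Lemma dual_gapE v tau g (y0 : vec) : dual_gap v tau g y0 =
  \sum_(i < n) dot (ystep g i) (dual_vars v g (n - i))
  + \sum_(j < n) v j.+1 * dot (g n.+1 - g j.+1) (g n.+1 - g j.+1)
  + (1 - tau) * dot (g n.+1) (g n.+1).
Proof.
have V_0E : V_0 (N := n.+1) H v g y0 =
    - \sum_(j < n) \sum_(i < n | (j <= i)%N)
        dot (ystep g i) (v j.+1 *: (g n.+1 - g j.+1))
    - \sum_(j < n) v j.+1 * dot (g n.+1 - g j.+1) (g n.+1 - g j.+1).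
  rewrite /V_0 big_mkord -sumrN -sumrB; apply: eq_bigr => j _.
  rewrite xseq_last_diff ?(ltnW (ltn_ord j)) // [in LHS]dotDl !dotNl dot_suml.
  by under [in RHS]eq_bigr do rewrite dotZr; rewrite -mulr_sumr; ring.
have crossE : \sum_(i < n) dot (ystep g i) (dual_vars v g (n - i)) =
    \sum_(i < n) dot (g n.+1) (ystep g i)
    + \sum_(i < n) \sum_(j < n | (j <= i)%N)
        dot (ystep g i) (v j.+1 *: (g n.+1 - g j.+1)).
  rewrite -big_split; apply: eq_bigr => i _ /=; rewrite /dual_vars.
  have -> : (n.+1 - (n - i) = i.+1)%N by have := ltn_ord i; lia.
  rewrite dotDr dot_sumr (dotC (g n.+1)).
  by rewrite (big_ord_widen_le
    (fun j => dot (ystep g i) (v j.+1 *: (g n.+1 - g j.+1)))).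
rewrite /dual_gap V_0E crossE exchange_big_tri xseq_last_sub.
by rewrite !(dotDr, dotNr) dot_sumr; ring.
Qed.

Lemma primal_gap_ext u tau g1 g2 (y0 : vec) :
  (forall k, (0 < k <= n.+1)%N -> g1 k = g2 k) ->
  primal_gap u tau g1 y0 = primal_gap u tau g2 y0.
Proof.
move=> eq_g; rewrite !primal_gapE (eq_g n.+1); last lia.
congr (_ + _).
apply: eq_bigr => i _; have lt_in := ltn_ord i.
rewrite (ystep_ext (g2 := g2)) => [|j le_ji]; last by apply: eq_g; lia.
by rewrite (eq_g i.+1) ?(eq_g i.+2) //; lia.
Qed.

Lemma primal_condE u tau :
  primal_cond (N := n.+1) d H u tau <-> forall g y0, 0 <= primal_gap u tau g y0.
Proof. by split=> cond g y0; have := cond g y0; rewrite subr_ge0. Qed.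

Lemma dual_condE v tau :
  dual_cond (N := n.+1) d H v tau <-> forall g y0, 0 <= dual_gap v tau g y0.
Proof. by split=> cond g y0; have := cond g y0; rewrite subr_ge0. Qed.

End Gaps.

Section Duality.
Variables (R : realFieldType) (d n : nat).
Notation vec := 'rV[R]_d.
Implicit Types (g : nat -> vec) (H : 'M[R]_n) (tau : R).

Lemma sum_dot_ystep_antiT H (a b : nat -> vec) :
  \sum_(i < n) dot (ystep (antiT H) a i) (b (n - i)%N) =
  \sum_(i < n) dot (ystep H b i) (a (n - i)%N).
Proof.
under eq_bigr do rewrite ystep_ord dot_suml.
under [RHS]eq_bigr do rewrite ystep_ord dot_suml.
rewrite reindex_big_tri_rev; apply: eq_bigr => i _; apply: eq_bigr => j _.
by rewrite mxE !rev_ordK /= subnSK // subKn // !dotZl dotC.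
Qed.

Variables (u v : nat -> R).

Lemma dual_vars_last g : dual_vars n v g n.+1 = g n.+1.
Proof. by rewrite /dual_vars subnn big_ord0 addr0. Qed.

Lemma dual_vars_diff g i : (i < n)%N ->
  dual_vars n v g i.+2 - dual_vars n v g i.+1 =
  - (v (n - i)%N *: (g n.+1 - g (n - i)%N)).
Proof.
move=> lt_in; rewrite /dual_vars !subSS -(subnSK lt_in) big_ord_recr /=.
by rewrite addrA opprD addNKr.
Qed.

Definition primal_vars g m : vec :=
  if (m < n.+1)%N
  then g n.+1 + u (n.+1 - m)%N *: (g (n.+2 - m)%N - g (n.+1 - m)%N)
  else g n.+1.

Lemma primal_vars_last g : primal_vars g n.+1 = g n.+1.
Proof. by rewrite /primal_vars ltnn. Qed.

Hypothesis uv1 : forall i, (i < n)%N -> u i.+1 * v (n - i)%N = 1.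

Lemma dual_gap_antiT H tau g (y0 : vec) :
  dual_gap (antiT H) v tau g y0 = primal_gap H u tau (dual_vars n v g) y0.
Proof.
have weightE i : (i < n)%N ->
    u i.+1 *: (dual_vars n v g i.+2 - dual_vars n v g i.+1)
    + dual_vars n v g n.+1 = g (n - i)%N.
  move=> lt_in; rewrite dual_vars_diff // dual_vars_last.
  by rewrite scalerN scalerA uv1 // scale1r opprB subrK.
have squareE i : (i < n)%N ->
    u i.+1 * dot (dual_vars n v g i.+2 - dual_vars n v g i.+1)
                 (dual_vars n v g i.+2 - dual_vars n v g i.+1) =
    v (n - i)%N * dot (g n.+1 - g (n - i)%N) (g n.+1 - g (n - i)%N).
  move=> lt_in; rewrite dual_vars_diff // dotNl dotNr opprK dotZl dotZr.
  by rewrite mulrA uv1 // mul1r.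
rewrite dual_gapE primal_gapE big_split /=.
under [X in _ = X + _ + _]eq_bigr => i _ do rewrite weightE //.
under [X in _ = _ + X + _]eq_bigr => i _ do rewrite squareE //.
rewrite dual_vars_last; congr (_ + _ + _); first exact: sum_dot_ystep_antiT.
rewrite [RHS](reindex_inj rev_ord_inj); apply: eq_bigr => j _.
by rewrite /= subKn.
Qed.

Lemma dual_vars_primal_vars g m :
  (0 < m <= n.+1)%N -> dual_vars n v (primal_vars g) m = g m.
Proof.
move=> m_range; apply: (eq_from_last_diffs m_range) => [|i lt_in].
  by rewrite dual_vars_last primal_vars_last.
have primal_vars_i :
    primal_vars g (n - i) = g n.+1 + u i.+1 *: (g i.+2 - g i.+1).
  rewrite /primal_vars ifT; last lia.
  by have [-> ->] : (n.+1 - (n - i) = i.+1 /\ n.+2 - (n - i) = i.+2)%N by lia.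
rewrite dual_vars_diff // primal_vars_last primal_vars_i opprD addNKr.
by rewrite scalerN opprK scalerA mulrC uv1 // scale1r.
Qed.

End Duality.

Theorem theoremD1 (R : realFieldType) (d N : nat) (u v : nat -> R)
    (H : 'M[R]_N.-1) (tau : R) :
  (2 <= N)%N ->
  (forall j, (1 <= j <= N.-1)%N -> 0 < u j) ->
  (forall j, (1 <= j <= N.-1)%N -> 0 < v j) ->
  (forall j, (1 <= j <= N.-1)%N -> v j = 1 / u (N - j)%N) ->
  is_trig_mx H ->
  0 < tau ->
  (primal_cond d H u tau <-> dual_cond d (antiT H) v tau).
Proof.
case: N H => [|n] H // _ u_gt0 _ v_inv _ _ /=.
have uv1 i : (i < n)%N -> u i.+1 * v (n - i)%N = 1.
  move=> lt_in; rewrite v_inv; last lia.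
  have -> : (n.+1 - (n - i) = i.+1)%N by lia.
  by rewrite div1r mulfV //; apply/lt0r_neq0/u_gt0; lia.
rewrite primal_condE dual_condE; split=> gap_ge0 g y0.
  by rewrite (dual_gap_antiT uv1).
rewrite -(primal_gap_ext _ _ _ _ (dual_vars_primal_vars uv1 g)).
by rewrite -(dual_gap_antiT uv1).
Qed.
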